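(* Let $\mathbb{F}_q$ be a finite field of odd characteristic, let $S_j=\{x\in\mathbb{F}_q^d : Q(x)=j\}$ with $j\in\mathbb{F}_q^*$ and $Q$ a non-degenerate quadratic form over $\mathbb{F}_q$, and let $E\subset S_j$. Then for all $z\in\mathbb{F}_q^d$, \[\#\{(x,y)\in E\times E: x-y+z\in S_j\}\lesssim (\#E)^2q^{-1}+(\#E)q^{\frac{d-1}{2}},\] where the implied constant is independent of $z$.
   Context: A quadratic form $Q(x)=\sum_{i,k=1}^d a_{ik}x_ix_k$ with $a_{ik}=a_{ki}\in\mathbb{F}_q$ is non-degenerate if the matrix $(a_{ik})$ is invertible. $X\lesssim Y$ means $X\le CY$ with $C$ independent of $q$ (and of $E$). *)

From mathcomp Require Import all_boot all_order all_algebra all_field.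
From Stdlib Require Import Reals.
Set Implicit Arguments. Unset Strict Implicit. Unset Printing Implicit Defensive.
Import GRing.Theory.
Local Open Scope ring_scope.

Definition qform (F : finFieldType) (d : nat) (A : 'M[F]_d) (x : 'rV[F]_d) : F :=
  \sum_(i < d) \sum_(k < d) A i k * x 0 i * x 0 k.

Definition qsphere (F : finFieldType) (d : nat) (A : 'M[F]_d) (j : F)
  : {set 'rV[F]_d} := [set x | qform A x == j].

Definition pair_count (F : finFieldType) (d : nat) (A : 'M[F]_d) (j : F)
  (E : {set 'rV[F]_d}) (z : 'rV[F]_d) : nat :=
  #|[set p : 'rV[F]_d * 'rV[F]_d |
      [&& p.1 \in E, p.2 \in E & p.1 - p.2 + z \in qsphere A j]]|.

From mathcomp Require Import all_boot all_order all_algebra all_field.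
From mathcomp Require Import Rstruct ring lra.
Set Implicit Arguments. Unset Strict Implicit. Unset Printing Implicit Defensive.
Import Order.TTheory GRing.Theory Num.Theory.
Local Open Scope ring_scope.

(** For [y] on the sphere, [x - y + z] lies on it iff [2 B(x + z, y) = Q(x + z)], where [B] is
    the polar form of [Q].  When [Q(x + z) != 0] this puts [y] on an affine hyperplane determined
    by [x]; when [Q(x + z) = 0] it puts [x] on the hyperplane [B(y, _ + z) = 0] determined by [y].
    Either way the count is a sum of incidences [#|P :&: H_s|] over a family of hyperplanes in
    which, up to rescaling by [F^*], each hyperplane occurs at most once, resp. twice ([y], [-y]).
    For every [P] the exact identity
    [\sum_(w, c) (q #|P :&: {y | w.y = c}| - |P|)^2 = q (q - 1) |P| q^d]
    and Cauchy-Schwarz give [(q \sum_s #|P :&: H_s| - |S| |P|)^2 <= M |S| q |P| q^d], that is,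
    [\sum_s #|P :&: H_s| <= |S| |P| / q + sqrt (M |S| |P|) q^((d - 1)/2)]. *)

Lemma cauchy_schwarz (R : realDomainType) (T : finType) (P : pred T) (f g : T -> R) :
  (\sum_(i | P i) f i * g i) ^+ 2 <=
  (\sum_(i | P i) f i ^+ 2) * (\sum_(i | P i) g i ^+ 2).
Proof.
set a := \sum_(i | P i) f i ^+ 2; set b := \sum_(i | P i) g i ^+ 2.
set c := \sum_(i | P i) f i * g i.
have lagrange : \sum_(i | P i) \sum_(k | P k) (f i * g k - f k * g i) ^+ 2 =
    a * b + b * a - 2 * (c * c).
  rewrite !big_distrlr /= mulr_sumr -!big_split -sumrB /=.
  apply: eq_bigr => i _; rewrite mulr_sumr -!big_split -sumrB /=.
  by apply: eq_bigr => k _; ring.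
have : 0 <= \sum_(i | P i) \sum_(k | P k) (f i * g k - f k * g i) ^+ 2.
  by apply: sumr_ge0 => i _; apply: sumr_ge0 => k _; apply: sqr_ge0.
rewrite lagrange expr2; nra.
Qed.

Lemma sum_comp_card_fibre (R : pzSemiRingType) (T U : finType) (A : {set T})
    (p : T -> U) (f : U -> R) :
  \sum_(x in A) f (p x) = \sum_u #|[set x in A | p x == u]|%:R * f u.
Proof.
rewrite (partition_big p predT) //=; apply: eq_bigr => u _.
rewrite (eq_bigr (fun=> f u)) => [|x /andP[_ /eqP ->]] //.
by rewrite sumr_const mulr_natl; congr (_ *+ _); apply: eq_card => x; rewrite !inE.
Qed.

Lemma natr_card_set (R : pzSemiRingType) (T : finType) (p : pred T) :
  #|[set x | p x]|%:R = \sum_x (p x)%:R :> R.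
Proof.
rewrite -sum1_card natr_sum [LHS]big_mkcond /=.
by apply: eq_bigr => x _; rewrite inE; case: (p x).
Qed.

Lemma sum_card_sep_exchange (T U : finType) (X : {set T}) (Y : {set U}) (c : T -> U -> bool) :
  (\sum_(x in X) #|[set y in Y | c x y]| = \sum_(y in Y) #|[set x in X | c x y]|)%N.
Proof.
have card_sep (V : finType) (W : {set V}) (p : pred V) :
    #|[set v in W | p v]| = (\sum_(v in W) p v)%N.
  by rewrite -sum1dep_card big_mkcondr; apply: eq_bigr => v _; case: (p v).
under eq_bigr do rewrite card_sep.
by rewrite exchange_big; apply: eq_bigr => y _; rewrite card_sep.
Qed.

Section Hyperplanes.
Variables (F : finFieldType) (d : nat).

Definition dot (u v : 'rV[F]_d) : F := \sum_(k < d) u 0 k * v 0 k.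

Lemma dotC u v : dot u v = dot v u.
Proof. by apply: eq_bigr => k _; rewrite mulrC. Qed.

Lemma dotDl u u' v : dot (u + u') v = dot u v + dot u' v.
Proof. by rewrite /dot -big_split; apply: eq_bigr => k _; rewrite mxE mulrDl. Qed.

Lemma dotZl c u v : dot (c *: u) v = c * dot u v.
Proof. by rewrite /dot mulr_sumr; apply: eq_bigr => k _; rewrite mxE mulrA. Qed.

Lemma dotNl u v : dot (- u) v = - dot u v.
Proof. by rewrite -scaleN1r dotZl mulN1r. Qed.

Lemma dotDr u v v' : dot u (v + v') = dot u v + dot u v'.
Proof. by rewrite dotC dotDl !(dotC u). Qed.

Lemma dotNr u v : dot u (- v) = - dot u v.
Proof. by rewrite dotC dotNl dotC. Qed.

Definition hyperplane (h : 'rV[F]_d * F) : {set 'rV[F]_d} := [set y | dot h.1 y == h.2].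

Lemma setI_hyperplane (P : {set 'rV[F]_d}) w c :
  P :&: hyperplane (w, c) = [set y in P | dot w y == c].
Proof. by apply/setP => y; rewrite !inE. Qed.

Definition scale_hyperplane (l : F) (h : 'rV[F]_d * F) := (l *: h.1, l * h.2).

Lemma hyperplaneZ l h : l != 0 -> hyperplane (scale_hyperplane l h) = hyperplane h.
Proof. by move=> l0; apply/setP => y; rewrite !inE dotZl (inj_eq (mulfI l0)). Qed.

Lemma dot_one_exists (v : 'rV[F]_d) : v != 0 -> exists u, dot u v = 1.
Proof.
move=> v0; have [k vk0] : exists k, v 0 k != 0.
  apply/existsP; apply: contraR v0 => /existsPn v0.
  by apply/eqP/rowP => k; rewrite mxE; exact/eqP/negPn/v0.
exists ((v 0 k)^-1 *: delta_mx 0 k).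
rewrite dotZl /dot (bigD1 k) //= big1 => [|i /negbTE ik]; last by rewrite mxE ik andbF mul0r.
by rewrite mxE !eqxx mul1r addr0 mulVf.
Qed.

Lemma card_dot_kernel (v : 'rV[F]_d) : v != 0 ->
  (#|[set w | dot w v == 0%R]| * #|F| = #|'rV[F]_d|)%N.
Proof.
move=> /dot_one_exists[u uv]; set K := [set w | _].
pose f (p : 'rV[F]_d * F) := p.1 + p.2 *: u.
have f_inj : {in setX K [set: F] &, injective f}.
  move=> [w c] [w' c'] /setXP[+ _] /setXP[+ _]; rewrite !inE /= => /eqP w0 /eqP w'0 eqf.
  have cc' : c = c'.
    by have := congr1 (dot^~ v) eqf; rewrite !dotDl !dotZl uv w0 w'0 !add0r !mulr1.
  by move: eqf; rewrite /f /= cc' => /addIr ->.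
have f_onto : f @: setX K [set: F] = [set: 'rV[F]_d].
  apply/setP => x; rewrite inE; apply/imsetP; exists (x - dot x v *: u, dot x v).
    by rewrite !inE /= dotDl dotNl dotZl uv mulr1 subrr eqxx.
  by rewrite /f /= subrK.
by rewrite -[#|F|]cardsT -cardsX -(card_in_imset f_inj) f_onto cardsT.
Qed.

Lemma card_dot_eq (y y' : 'rV[F]_d) : y' != y ->
  (#|[set w | dot w y' == dot w y]| * #|F| = #|'rV[F]_d|)%N.
Proof.
move=> neq; have -> : [set w | dot w y' == dot w y] = [set w | dot w (y' - y) == 0%R].
  by apply/setP => w; rewrite !inE dotDr dotNr subr_eq0.
by apply: card_dot_kernel; rewrite subr_eq0.
Qed.

End Hyperplanes.

Section Variance.
Variables (F : finFieldType) (d : nat) (R : comPzRingType) (P : {set 'rV[F]_d}).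
Local Notation q := #|F|%:R.
Local Notation n := #|P|%:R.
Local Notation N := #|'rV[F]_d|%:R.

Lemma sum_hyperplane_card_levels w : \sum_c #|P :&: hyperplane (w, c)|%:R = n :> R.
Proof.
rewrite -[n]sumr_const (sum_comp_card_fibre P (dot w) (fun=> 1 : R)).
by apply: eq_bigr => c _; rewrite mulr1 setI_hyperplane.
Qed.

Lemma sum_hyperplane_card_sqr_levels w :
  \sum_c #|P :&: hyperplane (w, c)|%:R ^+ 2 =
  \sum_(y in P) \sum_(y' in P) (dot w y' == dot w y)%:R :> R.
Proof.
under eq_bigr do rewrite expr2 setI_hyperplane.
rewrite -(sum_comp_card_fibre P (dot w) (fun c => #|[set y in P | dot w y == c]|%:R)).
apply: eq_bigr => y _; rewrite natr_card_set [RHS]big_mkcond.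
by apply: eq_bigr => y' _; case: (y' \in P).
Qed.

Lemma sum_dot_eq (y y' : 'rV[F]_d) :
  q * \sum_w (dot w y' == dot w y)%:R = N + (y' == y)%:R * (q - 1) * N :> R.
Proof.
rewrite -natr_card_set; have [-> | neq] := eqVneq y' y.
  have -> : [set w | dot w y == dot w y] = [set: 'rV[F]_d] by apply/setP => w; rewrite !inE eqxx.
  by rewrite cardsT /=; ring.
by rewrite -(card_dot_eq neq) natrM /=; ring.
Qed.

Lemma sum_hyperplane_card :
  \sum_(h : 'rV[F]_d * F) #|P :&: hyperplane h|%:R = N * n :> R.
Proof.
rewrite -(pair_bigA _ (fun w c => #|P :&: hyperplane (w, c)|%:R)) /=.
by rewrite (eq_bigr _ (fun w _ => sum_hyperplane_card_levels w)) sumr_const mulr_natl.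
Qed.

Lemma sum_hyperplane_card_sqr :
  q * \sum_(h : 'rV[F]_d * F) #|P :&: hyperplane h|%:R ^+ 2 = n * (n + q - 1) * N :> R.
Proof.
rewrite -(pair_bigA _ (fun w c => #|P :&: hyperplane (w, c)|%:R ^+ 2)) /=.
under eq_bigr do rewrite sum_hyperplane_card_sqr_levels.
rewrite exchange_big mulr_sumr (eq_bigr (fun=> (n + q - 1) * N)) => [|y yP].
  by rewrite sumr_const -mulrA mulr_natl.
rewrite /= exchange_big mulr_sumr (eq_bigr _ (fun y' _ => sum_dot_eq y y')) big_split /=.
rewrite sumr_const -mulr_suml -mulr_suml (bigD1 y) //= eqxx big1 => [|y' /andP[_ /negbTE ->]] //.
by rewrite addr0 -[N *+ _]mulr_natl mul1r; ring.
Qed.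

Lemma sum_hyperplane_dev_sqr :
  \sum_(h : 'rV[F]_d * F) (q * #|P :&: hyperplane h|%:R - n) ^+ 2 = q * (q - 1) * n * N :> R.
Proof.
have card_pairs : \sum_(h : 'rV[F]_d * F) n ^+ 2 = n ^+ 2 * (N * q) :> R.
  by rewrite sumr_const card_prod -natrM mulr_natr.
rewrite (eq_bigr (fun h => q ^+ 2 * #|P :&: hyperplane h|%:R ^+ 2
                           - 2 * q * n * #|P :&: hyperplane h|%:R + n ^+ 2));
  last by move=> h _; ring.
rewrite big_split sumrB /= -(mulr_sumr _ _ _ (q ^+ 2)) -(mulr_sumr _ _ _ (2 * q * n)).
by rewrite card_pairs sum_hyperplane_card [q ^+ 2]expr2 -mulrA sum_hyperplane_card_sqr; ring.
Qed.

End Variance.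

Section Families.
Variables (F : finFieldType) (d : nat) (R : realDomainType) (P : {set 'rV[F]_d}).
Local Notation q := #|F|%:R.
Local Notation n := #|P|%:R.
Local Notation N := #|'rV[F]_d|%:R.

Lemma hyperplane_family_bound (T : finType) (I : {set T}) (p : T -> 'rV[F]_d * F) (M : nat) :
  (forall h, #|[set i in I | p i == h]| <= M)%N ->
  (\sum_(i in I) (q * #|P :&: hyperplane (p i)|%:R - n)) ^+ 2 <=
  M%:R * #|I|%:R * (q * (q - 1) * n * N) :> R.
Proof.
move=> fibreM; pose mult h : R := #|[set i in I | p i == h]|%:R.
have cardI : #|I|%:R = \sum_h mult h.
  by rewrite -sumr_const (sum_comp_card_fibre I p (fun=> 1)); under eq_bigr do rewrite mulr1.
rewrite (sum_comp_card_fibre I p (fun h => q * #|P :&: hyperplane h|%:R - n)).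
rewrite -sum_hyperplane_dev_sqr; apply: le_trans (cauchy_schwarz _ _ _) _.
apply: ler_wpM2r; first by apply: sumr_ge0 => h _; exact: sqr_ge0.
rewrite cardI mulr_sumr; apply: ler_sum => h _; rewrite expr2 ler_wpM2r ?ler0n // ler_nat.
exact: fibreM.
Qed.

(* Each hyperplane occurs [q - 1] times among the rescaled pairs, which turns the factor [q - 1]
   of [hyperplane_family_bound] into a factor [(q - 1)^2] on the left-hand side. *)
Lemma scaled_hyperplane_family_bound (T : finType) (S : {set T}) (h : T -> 'rV[F]_d * F)
    (M : nat) :
  (forall h0, #|[set sl in setX S [set~ 0%R] | scale_hyperplane sl.2 (h sl.1) == h0]| <= M)%N ->
  (q * \sum_(s in S) #|P :&: hyperplane (h s)|%:R - #|S|%:R * n) ^+ 2 <=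
  M%:R * #|S|%:R * (q * n * N) :> R.
Proof.
move=> /hyperplane_family_bound.
have card_units : #|[set~ 0 : F]|%:R = q - 1 :> R.
  by rewrite cardsC1 -subn1 natrB // ltnW // card_finNzRing_gt1.
rewrite cardsX natrM card_units.
rewrite (eq_bigl (fun sl => (sl.1 \in S) && (sl.2 \in [set~ 0]))) => [|[s l]]; last first.
  by rewrite in_setX.
rewrite -(pair_big_dep (fun s => s \in S) (fun _ l => l \in [set~ 0%R])
  (fun s l => q * #|P :&: hyperplane (scale_hyperplane l (h s))|%:R - n)) /=.
rewrite (eq_bigr (fun s => (q - 1) * (q * #|P :&: hyperplane (h s)|%:R - n))) => [|s _].
  rewrite -mulr_sumr sumrB -mulr_sumr sumr_const -[n *+ _]mulr_natl exprMn.
  have q1_gt0 : 0 < (q - 1) ^+ 2 :> R.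
    by rewrite exprn_gt0 // subr_gt0 ltr1n card_finNzRing_gt1.
  suff -> : M%:R * (#|S|%:R * (q - 1)) * (q * (q - 1) * n * N) =
            (q - 1) ^+ 2 * (M%:R * #|S|%:R * (q * n * N)) :> R by rewrite ler_pM2l.
  by ring.
rewrite (eq_bigr (fun=> q * #|P :&: hyperplane (h s)|%:R - n)) => [|l]; last first.
  by rewrite !inE => l0; rewrite hyperplaneZ.
by rewrite sumr_const -[_ *+ #|_|]mulr_natl card_units.
Qed.

End Families.

Section QuadraticForm.
Variables (F : finFieldType) (d : nat) (A : 'M[F]_d).

Definition bform (x y : 'rV[F]_d) : F := dot (x *m A) y.

Lemma qformE x : qform A x = bform x x.
Proof.
rewrite /qform /bform /dot exchange_big /=; apply: eq_bigr => k _.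
by rewrite mxE mulr_suml; apply: eq_bigr => i _; rewrite (mulrC (A i k)).
Qed.

Lemma bformDl x x' y : bform (x + x') y = bform x y + bform x' y.
Proof. by rewrite /bform mulmxDl dotDl. Qed.

Lemma bformDr x y y' : bform x (y + y') = bform x y + bform x y'.
Proof. by rewrite /bform dotDr. Qed.

Lemma bformZl c x y : bform (c *: x) y = c * bform x y.
Proof. by rewrite /bform -scalemxAl dotZl. Qed.

Lemma bformZr c x y : bform x (c *: y) = c * bform x y.
Proof. by rewrite /bform dotC dotZl dotC. Qed.

Lemma qformZ c x : qform A (c *: x) = c ^+ 2 * qform A x.
Proof. by rewrite !qformE bformZl bformZr mulrA expr2. Qed.

Hypothesis A_sym : A^T = A.

Lemma bformC x y : bform x y = bform y x.
Proof.
rewrite /bform /dot; under eq_bigr do rewrite mxE mulr_suml.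
under [RHS]eq_bigr do rewrite mxE mulr_suml.
rewrite exchange_big /=; apply: eq_bigr => i _; apply: eq_bigr => k _.
by rewrite -[in RHS]A_sym mxE; ring.
Qed.

Lemma qformB x y : qform A (x - y) = qform A x - 2 * bform x y + qform A y.
Proof.
rewrite !qformE -scaleN1r bformDl !bformDr !bformZl !bformZr (bformC y x); ring.
Qed.

End QuadraticForm.

Lemma pair_count_sum (F : finFieldType) (d : nat) (A : 'M[F]_d) (j : F) E z :
  (pair_count A j E z = \sum_(x in E) #|[set y in E | (x - y + z)%R \in qsphere A j]|)%N.
Proof.
rewrite /pair_count -sum1dep_card.
rewrite -(pair_big_dep (fun x => x \in E) (fun x y => (y \in E) && (x - y + z \in qsphere A j))
  (fun _ _ => 1%N)) /=.
by apply: eq_bigr => x _; rewrite sum1dep_card.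
Qed.

Section PairCount.
Variables (F : finFieldType) (d : nat) (A : 'M[F]_d) (j : F) (E : {set 'rV[F]_d}) (z : 'rV[F]_d).
Hypotheses (F_char : (2 \notin [pchar F])%N) (A_sym : A^T = A) (A_unit : A \in unitmx).
Hypotheses (j_neq0 : j != 0) (E_sphere : E \subset qsphere A j).

Lemma two_neq0 : (2 : F) != 0.
Proof. by apply: contra F_char => /eqP two0; rewrite inE /= two0 eqxx. Qed.

Lemma qform_sphere y : y \in E -> qform A y = j.
Proof. by move=> /(subsetP E_sphere); rewrite inE => /eqP. Qed.

Lemma qsphere_shiftE x y : y \in E ->
  (x - y + z \in qsphere A j) = (2 * bform A (x + z) y == qform A (x + z)).
Proof.
move=> yE; rewrite inE addrAC qformB // (qform_sphere yE).
by rewrite -subr_eq0 addrK subr_eq0 eq_sym.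
Qed.

Definition E_aniso := [set x in E | qform A (x + z) != 0].
Definition E_iso := [set x in E | qform A (x + z) == 0].

Definition aniso_hyperplane (x : 'rV[F]_d) := ((x + z) *m A, qform A (x + z) / 2).
Definition iso_hyperplane (y : 'rV[F]_d) := (y *m A, - bform A y z).

Lemma aniso_fibreE x :
  [set y in E | x - y + z \in qsphere A j] = E :&: hyperplane (aniso_hyperplane x).
Proof.
apply/setP => y; rewrite inE [in RHS]inE; case yE: (y \in E) => //=.
by rewrite qsphere_shiftE // inE (can2_eq (mulKf two_neq0) (mulVKf two_neq0)) mulrC.
Qed.

Lemma iso_fibreE x y : x \in E_iso -> y \in E ->
  (x - y + z \in qsphere A j) = (x \in hyperplane (iso_hyperplane y)).
Proof.
rewrite inE => /andP[_ /eqP null] yE.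
rewrite qsphere_shiftE // null mulf_eq0 (negbTE two_neq0) bformC // bformDr inE /=.
by rewrite addr_eq0.
Qed.

Lemma scale_mulmx_inj (l l' : F) (u u' : 'rV[F]_d) :
  l *: (u *m A) = l' *: (u' *m A) -> l *: u = l' *: u'.
Proof. by move=> e; apply: (can_inj (mulmxK A_unit)); rewrite -!scalemxAl. Qed.

Lemma aniso_fibre_card h0 :
  (#|[set sl in setX E_aniso [set~ 0%R] | scale_hyperplane sl.2 (aniso_hyperplane sl.1) == h0]|
   <= 1)%N.
Proof.
apply/card_le1_eqP => [[x l]] [x' l']; rewrite !inE /=.
move=> /andP[/andP[/andP[_ Qx] l0] /eqP <-] /andP[_ /eqP [e1 e2]].
have {e1} lu := scale_mulmx_inj e1.
have {e2} lQ : l' * qform A (x' + z) = l * qform A (x + z).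
  by apply: (mulIf (invr_neq0 two_neq0)); rewrite -!mulrA.
have ll : l' = l.
  apply: (mulIf (mulf_neq0 l0 Qx)).
  by rewrite -{1}lQ !mulrA -!expr2 -!qformZ lu.
by move: lu; rewrite ll => /(scalerI l0) /addIr ->.
Qed.

Lemma iso_fibre_card h0 :
  (#|[set sl in setX E [set~ 0%R] | scale_hyperplane sl.2 (iso_hyperplane sl.1) == h0]| <= 2)%N.
Proof.
set S := [set sl in _ | _]; have [-> | [[y l] ylS]] := set_0Vmem S; first by rewrite cards0.
suff sub : S \subset [set (y, l); (- y, - l)].
  by apply: leq_trans (subset_leq_card sub) _; rewrite cards2 ltnS leq_b1.
apply/subsetP => -[y' l']; move: ylS; rewrite !inE /=.
move=> /andP[/andP[yE l0] /eqP <-] /andP[/andP[y'E _] /eqP [e1 _]].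
have {e1} lu := scale_mulmx_inj e1.
have : l' ^+ 2 == l ^+ 2.
  by apply/eqP/(mulIf j_neq0); rewrite -{1}(qform_sphere y'E) -(qform_sphere yE) -!qformZ lu.
rewrite eqf_sqr => /orP[/eqP ll | /eqP ll]; move: lu; rewrite ll.
  by move=> /(scalerI l0) ->; rewrite eqxx.
by rewrite scaleNr -scalerN => /(scalerI l0) <-; rewrite opprK eqxx orbT.
Qed.

Lemma pair_count_split : (pair_count A j E z =
  \sum_(x in E_aniso) #|E :&: hyperplane (aniso_hyperplane x)| +
  \sum_(y in E) #|E_iso :&: hyperplane (iso_hyperplane y)|)%N.
Proof.
rewrite pair_count_sum (bigID (fun x => qform A (x + z) != 0)) /=; congr (_ + _)%N.
  by apply: eq_big => [x | x _]; rewrite ?inE ?aniso_fibreE.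
rewrite (eq_bigl (mem E_iso)) => [|x]; last by rewrite !inE negbK.
rewrite sum_card_sep_exchange; apply: eq_bigr => y yE; apply: eq_card => x.
by rewrite in_setI [in LHS]inE; case xE: (x \in E_iso); rewrite //= iso_fibreE.
Qed.

Variable R : realDomainType.

Lemma aniso_count_bound :
  (#|F|%:R * (\sum_(x in E_aniso) #|E :&: hyperplane (aniso_hyperplane x)|)%:R
     - #|E_aniso|%:R * #|E|%:R) ^+ 2
  <= #|E_aniso|%:R * (#|F|%:R * #|E|%:R * #|'rV[F]_d|%:R) :> R.
Proof.
by have := scaled_hyperplane_family_bound R E aniso_fibre_card; rewrite natr_sum mul1r.
Qed.

Lemma iso_count_bound :
  (#|F|%:R * (\sum_(y in E) #|E_iso :&: hyperplane (iso_hyperplane y)|)%:R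
     - #|E|%:R * #|E_iso|%:R) ^+ 2
  <= 2 * #|E|%:R * (#|F|%:R * #|E_iso|%:R * #|'rV[F]_d|%:R) :> R.
Proof. by have := scaled_hyperplane_family_bound R E_iso iso_fibre_card; rewrite natr_sum. Qed.

End PairCount.

Lemma ler_of_sqr_le (R : realDomainType) (x K : R) : 0 <= K -> x ^+ 2 <= K ^+ 2 -> x <= K.
Proof. by move=> K0 xK; nra. Qed.

Lemma sqrt_exp_succ_le (R : rcfType) (q : R) (d : nat) : 1 <= q ->
  Num.sqrt q ^+ d.+1 <= q * Num.sqrt q ^+ (d - 1).
Proof.
move=> q1; have q0 := le_trans ler01 q1.
have s1 : 1 <= Num.sqrt q by rewrite -sqrtr1 ler_sqrt.
rewrite -{2}[q]sqr_sqrtr //; set s := Num.sqrt q.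
case: d => [|d]; first by rewrite expr0 mulr1 expr1 expr2 ler_peMr // (le_trans ler01 s1).
by rewrite subn1 /= -exprD add2n.
Qed.

Lemma incidence_sums_le (R : rcfType) (d : nat) (q n g b Ca Ci : R) :
  1 <= q -> 0 <= n -> g <= n -> b <= n ->
  (q * Ca - g * n) ^+ 2 <= g * (q * n * q ^+ d) ->
  (q * Ci - n * b) ^+ 2 <= 2 * n * (q * b * q ^+ d) ->
  Ca + Ci <= 3 * (n ^+ 2 / q + n * Num.sqrt q ^+ (d - 1)).
Proof.
move=> q1 n0 g_le b_le aniso_le iso_le.
have q_gt0 : 0 < q := lt_le_trans ltr01 q1; have q0 := ltW q_gt0.
set s := Num.sqrt q; set t := s ^+ (d - 1).
have qs : q * q ^+ d = (s ^+ d.+1) ^+ 2 by rewrite -exprM mulnC exprM sqr_sqrtr ?exprS.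
have K0 : 0 <= n * s ^+ d.+1 by rewrite mulr_ge0 ?exprn_ge0 ?sqrtr_ge0.
have nqd0 : 0 <= n * (q * q ^+ d) by rewrite !mulr_ge0 ?exprn_ge0.
have aniso_K : q * Ca <= g * n + n * s ^+ d.+1.
  rewrite -lerBlDl; apply: ler_of_sqr_le => //; apply: le_trans aniso_le _.
  by rewrite exprMn -qs; nra.
have iso_K : q * Ci <= n * b + 2 * (n * s ^+ d.+1).
  rewrite -lerBlDl; apply: ler_of_sqr_le; first by rewrite mulr_ge0.
  by apply: le_trans iso_le _; rewrite !exprMn -qs; nra.
have K_le : n * s ^+ d.+1 <= n * (q * t) by rewrite ler_wpM2l // sqrt_exp_succ_le.
rewrite -(ler_pM2l q_gt0).
have -> : q * (3 * (n ^+ 2 / q + n * t)) = 3 * n ^+ 2 + 3 * (n * (q * t)).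
  by field; rewrite gt_eqF.
nra.
Qed.

Lemma pair_count_le (R : rcfType) (F : finFieldType) (d : nat) (A : 'M[F]_d) (j : F)
    (E : {set 'rV[F]_d}) (z : 'rV[F]_d) :
  (2 \notin [pchar F])%N -> A^T = A -> A \in unitmx -> j != 0 -> E \subset qsphere A j ->
  (pair_count A j E z)%:R <=
  3 * (#|E|%:R ^+ 2 / #|F|%:R + #|E|%:R * Num.sqrt #|F|%:R ^+ (d - 1)) :> R.
Proof.
move=> F_char A_sym A_unit j0 E_sph.
rewrite (pair_count_split z F_char A_sym E_sph) natrD.
apply: (incidence_sums_le (g := #|E_aniso A E z|%:R) (b := #|E_iso A E z|%:R)).
- by rewrite ler1n ltnW // card_finNzRing_gt1.
- exact: ler0n.
- by rewrite ler_nat subset_leq_card //; apply/subsetP => x; rewrite inE => /andP[].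
- by rewrite ler_nat subset_leq_card //; apply/subsetP => x; rewrite inE => /andP[].
- by have := aniso_count_bound E z F_char A_unit R; rewrite card_mx mul1n natrX.
- by have := iso_count_bound z A_unit j0 E_sph R; rewrite card_mx mul1n natrX.
Qed.

From Stdlib Require Import Reals.
Local Open Scope ring_scope.

Theorem theorem5p1 :
  forall d : nat, exists C : R, (0 < C)%R /\
  forall (F : finFieldType) (A : 'M[F]_d) (j : F) (E : {set 'rV[F]_d}) (z : 'rV[F]_d),
    (2 \notin [pchar F])%N ->
    A^T = A -> A \in unitmx ->
    j != 0 ->
    E \subset qsphere A j ->
    (INR (pair_count A j E z)
      <= C * (INR #|E| ^ 2 / INR #|F| + INR #|E| * sqrt (INR #|F|) ^ (d - 1)))%R.
Proof.
move=> d; exists (INR 3); split; first by apply/RltP; rewrite INRE ltr0n.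
move=> F A j E z F_char A_sym A_unit j0 E_sph; apply/RleP; rewrite !RealsE.
exact: pair_count_le.
Qed.
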